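(* Under the standing setup, define for $x\in\mathcal{B}$ $$f_h(x):=T_x^{-1}\left[T_{P(x)}\,DP_x\,T_x^{-1}\right]^\dagger T_{P(x)}\,g(P(x)).$$ Then $DP_x f_h(x)=g(P(x))$ for every $x\in\mathcal{B}$ (i.e. $f_h$ is a lift of $g$), and $f_h(x)=g(x)$ for every $x\in\mathcal{M}$.
   Context: Standing setup: integers $0<k<n$, $r\ge1$. $\tilde{\mathcal M}$ is a compact connected $k$-dimensional $C^r$ manifold with a $C^r$ vector field $\tilde g$. $\mathcal{B}\subseteq\mathbb{R}^n$ is a connected open set with the Euclidean inner product $\langle\cdot,\cdot\rangle$ and norm $\|\cdot\|$; tangent spaces are identified with $\mathbb{R}^n$. $F:\tilde{\mathcal M}\to\mathcal{B}$ is a proper $C^r$ embedding, $\mathcal{M}:=F(\tilde{\mathcal M})$, and $g$ is the vector field on $\mathcal{M}$ with $g(F(p))=DF_p\tilde g(p)$. (A1) $G:\mathcal{B}\to\mathbb{R}^{n-k}$ is a $C^r$ submersion with $G^{-1}(0)=\mathcal{M}$. (A2) $\tilde P:\mathcal{B}\to\tilde{\mathcal M}$ is $C^r$ with $\tilde P|_{\mathcal M}=F^{-1}$; $P:=F\circ\tilde P:\mathcal{B}\to\mathcal{B}$. (A3) $\mathbb{R}^n=\ker DP_x\oplus\ker DG_x$ for every $x\in\mathcal{B}$. For a linear map $L$ between Euclidean spaces, $L^\dagger$ denotes its Moore–Penrose pseudoinverse. $T_x:=\left[I-DG_x^\dagger DG_x\right]DP_x^\dagger DP_x+DG_x^\dagger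 DG_x$, which is an invertible linear map of $\mathbb{R}^n$ for every $x\in\mathcal{B}$. *)

From HB Require Import structures.
From mathcomp Require Import all_boot all_order all_algebra.
From mathcomp Require Import all_classical all_reals all_analysis.
Set Implicit Arguments.
Unset Strict Implicit.
Unset Printing Implicit Defensive.
Import Order.TTheory GRing.Theory Num.Theory.
Import numFieldNormedType.Exports.
Local Open Scope classical_set_scope.
Local Open Scope ring_scope.

(* Points of R^n are column vectors 'cV[R]_n; linear maps R^n -> R^m are
   matrices 'M[R]_(m, n) acting by  A *m v. *)

Definition basis_vec (R : realType) (n : nat) (j : 'I_n) : 'cV[R]_n :=
  delta_mx j 0.

Definition Dmx (R : realType) (n m : nat) (f : 'cV[R]_n -> 'cV[R]_m)
    (x : 'cV[R]_n) : 'M[R]_(m, n) :=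
  \matrix_(i < m, j < n) ('D_(basis_vec R j) f x) i 0.

Fixpoint Cr (R : realType) (n m : nat) (r : nat) (B : set 'cV[R]_n)
    (f : 'cV[R]_n -> 'cV[R]_m) : Prop :=
  match r with
  | 0 => forall x, B x -> {for x, continuous f}
  | r'.+1 => (forall x, B x -> differentiable f x) /\
             (forall v : 'cV[R]_n, Cr r' B (fun x => 'D_v f x))
  end.

(* Moore-Penrose pseudoinverse, characterized by the four Penrose
   equations (w.r.t. the Euclidean inner product, adjoint = transpose). *)
Definition penrose (R : realType) (m n : nat) (A : 'M[R]_(m, n))
    (X : 'M[R]_(n, m)) : Prop :=
  [/\ A *m X *m A = A, X *m A *m X = X,
      (A *m X)^T = A *m X & (X *m A)^T = X *m A].

Definition mpinv (R : realType) (m n : nat) (A : 'M[R]_(m, n)) : 'M[R]_(n, m) :=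
  xget 0 [set X | penrose A X].

Definition tangent_space (R : realType) (n : nat) (M : set 'cV[R]_n)
    (y : 'cV[R]_n) : set 'cV[R]_n :=
  [set v | exists gamma : R -> 'cV[R]_n,
     [/\ gamma 0 = y, (forall t, M (gamma t)),
         derivable gamma 0 1 & 'D_1 gamma 0 = v]].

Definition Tmx (R : realType) (n k : nat)
    (P : 'cV[R]_n -> 'cV[R]_n) (G : 'cV[R]_n -> 'cV[R]_(n - k))
    (x : 'cV[R]_n) : 'M[R]_n :=
  (1%:M - mpinv (Dmx G x) *m Dmx G x) *m mpinv (Dmx P x) *m Dmx P x
  + mpinv (Dmx G x) *m Dmx G x.

Definition f_h (R : realType) (n k : nat)
    (P : 'cV[R]_n -> 'cV[R]_n) (G : 'cV[R]_n -> 'cV[R]_(n - k))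
    (g : 'cV[R]_n -> 'cV[R]_n) (x : 'cV[R]_n) : 'cV[R]_n :=
  invmx (Tmx P G x)
  *m mpinv (Tmx P G (P x) *m Dmx P x *m invmx (Tmx P G x))
  *m Tmx P G (P x) *m g (P x).

From HB Require Import structures.
From mathcomp Require Import all_boot all_order all_algebra.
From mathcomp Require Import all_classical all_reals all_analysis.
From mathcomp Require Import zify.
Import Order.TTheory GRing.Theory Num.Theory.
Import numFieldNormedType.Exports.
Local Open Scope classical_set_scope.
Local Open Scope ring_scope.

(* Write A := DP_x and Q := I - DG^+ DG.  Differentiating G o P = 0 and
   P o P = P on M gives DG_(P x) A = 0 and, on M, A A = A; together with
   (A3) this shows that the columns of A span ker DG_(P x), which contains
   the tangent vector g(P x).  Hence g(P x) = A u for some u, and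
   C := T_(P x) A T_x^-1 satisfies C C^+ C = C, which yields A f_h(x) = g(P x).
   On M one has moreover T A = Q T, so C = Q is an orthogonal projector,
   C^+ acts as the identity on its range and f_h(x) = g(x). *)

(** * Linear algebra *)

Section LinearAlgebra.
Local Set Implicit Arguments.
Local Unset Strict Implicit.
Variable R : realType.

Lemma trmx_mul_self_eq0 n (u : 'cV[R]_n) : u^T *m u = 0 -> u = 0.
Proof.
move=> /matrixP /(_ 0 0); rewrite !mxE.
under eq_bigr => i _ do rewrite mxE; move=> sum0.
have sq0 i : u i 0 * u i 0 = 0.
  by apply: (psumr_eq0P _ sum0) => // j _; rewrite -expr2 sqr_ge0.
apply/matrixP => i j; rewrite (ord1 j) mxE.
by have /eqP := sq0 i; rewrite mulf_eq0 orbb => /eqP.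
Qed.

Lemma mulmx_trmx_self_eq0 n (w : 'rV[R]_n) : w *m w^T = 0 -> w = 0.
Proof.
move=> ww0; apply: trmx_inj; rewrite trmx0.
by apply: trmx_mul_self_eq0; rewrite trmxK.
Qed.

Lemma row_free_gram_unitmx m n (U : 'M[R]_(m, n)) :
  row_free U -> U *m U^T \in unitmx.
Proof.
move=> fU; rewrite -row_free_unit; apply: inj_row_free => w wUU0.
have : (w *m U) *m (w *m U)^T = 0.
  by rewrite trmx_mul !mulmxA -(mulmxA w U) wUU0 mul0mx.
by move/mulmx_trmx_self_eq0/eqP; rewrite (mulmx_free_eq0 _ fU) => /eqP.
Qed.

Lemma surj_row_free p n (A : 'M[R]_(p, n)) :
  (forall w : 'cV[R]_p, exists v, A *m v = w) -> row_free A.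
Proof.
move=> surjA; apply: inj_row_free => w wA0; have [v Av] := surjA w^T.
by apply: mulmx_trmx_self_eq0; rewrite -Av mulmxA wA0 mul0mx.
Qed.

Lemma inj_col_unitmx n (A : 'M[R]_n) :
  (forall v : 'cV[R]_n, A *m v = 0 -> v = 0) -> A \in unitmx.
Proof.
move=> injA; rewrite -unitmx_tr -row_free_unit; apply: inj_row_free => w wA0.
have : A *m w^T = 0 by rewrite -[A]trmxK -trmx_mul wA0 trmx0.
by move/injA/(congr1 trmx); rewrite trmxK trmx0.
Qed.

Lemma mulmx_colI m n (A B : 'M[R]_(m, n)) :
  (forall v : 'cV[R]_n, A *m v = B *m v) -> A = B.
Proof.
move=> eqAB; apply/matrixP => i j.
by have /matrixP/(_ i 0) := eqAB (delta_mx j 0); rewrite -!colE !mxE.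
Qed.

Lemma rank_ker_complement n p (A : 'M[R]_n) (Gm : 'M[R]_(p, n)) :
  row_free Gm ->
  (forall v : 'cV[R]_n, exists a b, [/\ A *m a = 0, Gm *m b = 0 & v = a + b]) ->
  (forall a : 'cV[R]_n, A *m a = 0 -> Gm *m a = 0 -> a = 0) ->
  \rank A = (n - p)%N.
Proof.
move=> fG ker_sum ker_cap.
set KA := kermx A^T; set KG := kermx Gm^T.
have rKA : \rank KA = (n - \rank A)%N by rewrite mxrank_ker mxrank_tr.
have rG : \rank Gm = p by apply/eqP.
have rKG : \rank KG = (n - p)%N by rewrite mxrank_ker mxrank_tr rG.
have full : \rank (KA + KG)%MS = n.
  apply/eqP; rewrite -[_ == n]sub1mx; apply/row_subP => i.
  have [a [b [Aa Gb e]]] := ker_sum (row i 1%:M)^T.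
  have -> : row i 1%:M = a^T + b^T by rewrite -linearD /= -e trmxK.
  by apply: addmx_sub_adds; rewrite sub_kermx -trmx_mul ?Aa ?Gb trmx0.
have cap : \rank (KA :&: KG)%MS = 0%N.
  apply/eqP; rewrite mxrank_eq0 -submx0; apply/row_subP => i.
  rewrite submx0; set w := row i _.
  have /(submx_trans (row_sub i _)) := capmxSl KA KG; rewrite sub_kermx => wA.
  have /(submx_trans (row_sub i _)) := capmxSr KA KG; rewrite sub_kermx => wG.
  suff wT0 : w^T = 0 by rewrite -[w]trmxK wT0 trmx0.
  apply: ker_cap.
    by apply: trmx_inj; rewrite trmx_mul trmxK trmx0; apply/eqP.
  by apply: trmx_inj; rewrite trmx_mul trmxK trmx0; apply/eqP.
have := mxrank_sum_cap KA KG; rewrite full cap rKA rKG.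
by have := rank_leq_row A; have := rank_leq_col Gm; rewrite rG; lia.
Qed.

(* A dimension count: the columns of A lie in ker Gm, which has the same
   dimension n - p. *)
Lemma ker_sub_range n p (A : 'M[R]_n) (Gm : 'M[R]_(p, n)) (w : 'cV[R]_n) :
  row_free Gm -> \rank A = (n - p)%N -> Gm *m A = 0 -> Gm *m w = 0 ->
  exists u, w = A *m u.
Proof.
move=> fG rA GA Gw.
set K := kermx Gm^T.
have rK : \rank K = (n - p)%N by rewrite mxrank_ker mxrank_tr (eqP fG).
have AtK : (A^T <= K)%MS by rewrite sub_kermx -trmx_mul GA trmx0.
have := (mxrank_leqif_eq AtK).2; rewrite mxrank_tr rA rK eqxx.
move=> /esym/andP[_ KAt].
have wK : (w^T <= K)%MS by rewrite sub_kermx -trmx_mul Gw trmx0.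
have /submxP[D eD] := submx_trans wK KAt.
by exists D^T; rewrite -[w]trmxK eD trmx_mul trmxK.
Qed.

(** * The Moore-Penrose pseudoinverse *)

(* For a full-rank factorization A = L U the pseudoinverse is
   U^T (U U^T)^-1 (L^T L)^-1 L^T. *)
Lemma penrose_full_rank_factor m r n (L : 'M[R]_(m, r)) (U : 'M[R]_(r, n)) :
  row_free L^T -> row_free U -> exists X, penrose (L *m U) X.
Proof.
move=> fL fU.
have uL := row_free_gram_unitmx fL; rewrite trmxK in uL.
have uU := row_free_gram_unitmx fU.
set Li := invmx (L^T *m L); set Ui := invmx (U *m U^T).
have LiL : Li *m (L^T *m L) = 1%:M by rewrite mulVmx.
have UUi : (U *m U^T) *m Ui = 1%:M by rewrite mulmxV.
have symLi : Li^T = Li by rewrite /Li trmx_inv trmx_mul trmxK.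
have symUi : Ui^T = Ui by rewrite /Ui trmx_inv trmx_mul trmxK.
exists (U^T *m Ui *m Li *m L^T).
have AX : (L *m U) *m (U^T *m Ui *m Li *m L^T) = L *m Li *m L^T.
  by rewrite !mulmxA -(mulmxA L U) -(mulmxA L) UUi mulmx1.
have XA : (U^T *m Ui *m Li *m L^T) *m (L *m U) = U^T *m Ui *m U.
  by rewrite !mulmxA -(mulmxA _ L^T) -(mulmxA _ Li) LiL mulmx1.
split.
- by rewrite AX !mulmxA -(mulmxA (L *m Li) L^T L) -(mulmxA L Li) LiL mulmx1.
- rewrite XA !mulmxA -(mulmxA (U^T *m Ui) U U^T).
  by rewrite -(mulmxA (U^T *m Ui) (U *m U^T) Ui) UUi mulmx1.
- by rewrite AX !trmx_mul trmxK symLi mulmxA.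
- by rewrite XA !trmx_mul trmxK symUi mulmxA.
Qed.

Lemma mpinvP m n (A : 'M[R]_(m, n)) : penrose A (mpinv A).
Proof.
apply: (@xgetPex _ 0 [set X | penrose A X]).
have fL : row_free (col_base A)^T.
  by rewrite /row_free mxrank_tr; exact: col_base_full.
by have := penrose_full_rank_factor fL (row_base_free A); rewrite mulmx_base.
Qed.

Lemma penrose_projector m n (A : 'M[R]_(m, n)) X : penrose A X ->
  (X *m A) *m (X *m A) = X *m A /\ (X *m A)^T = X *m A.
Proof. by case=> _ XAX _ symXA; rewrite mulmxA XAX. Qed.

Lemma penrose_coprojector m n (A : 'M[R]_(m, n)) X : penrose A X ->
  (1%:M - X *m A) *m (1%:M - X *m A) = 1%:M - X *m A /\
  (1%:M - X *m A)^T = 1%:M - X *m A.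
Proof.
move=> /penrose_projector[idemXA symXA].
rewrite mulmxBr mulmx1 mulmxBl mul1mx idemXA subrr subr0.
by rewrite linearB /= trmx1 symXA.
Qed.

Lemma penrose_sym_idem n (Q X : 'M[R]_n) :
  Q^T = Q -> Q *m Q = Q -> penrose Q X -> X *m Q = Q.
Proof.
move=> symQ QQ [QXQ _ _ symXQ].
have XQ : X *m Q = Q *m X^T by rewrite -symXQ trmx_mul symQ.
have QXtQ : Q *m X^T *m Q = Q.
  by have := congr1 trmx QXQ; rewrite !trmx_mul symQ mulmxA.
by rewrite -QQ mulmxA XQ QXtQ.
Qed.

Lemma conj_penrose_lift n (A T T' X : 'M[R]_n) (u : 'cV[R]_n) :
  T \in unitmx -> T' \in unitmx -> penrose (T' *m A *m invmx T) X ->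
  A *m (invmx T *m X *m T' *m (A *m u)) = A *m u.
Proof.
move=> uT uT' [CXC _ _ _].
set C := T' *m A *m invmx T in CXC *.
have CT : C *m T = T' *m A by rewrite /C mulmxKV.
apply: (can_inj (mulKmx uT')).
by rewrite !mulmxA -/C -(mulmxA (C *m X) T' A) -CT (mulmxA (C *m X)) CXC.
Qed.

Lemma conj_penrose_fix n (A T Q X : 'M[R]_n) (u : 'cV[R]_n) :
  T \in unitmx -> A *m A = A -> T *m A = Q *m T -> Q^T = Q -> Q *m Q = Q ->
  penrose (T *m A *m invmx T) X ->
  invmx T *m X *m T *m (A *m u) = A *m u.
Proof.
move=> uT AA TA symQ QQ; rewrite TA mulmxK // => /(penrose_sym_idem symQ QQ) XQ.
have TAu : T *m (A *m u) = Q *m (T *m (A *m u)).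
  by rewrite !mulmxA -TA -(mulmxA T A A) AA.
by rewrite -!mulmxA TAu (mulmxA X Q) XQ -TAu mulKmx.
Qed.

(** * The matrix T_x *)

Section Tmat.
Variables (n p : nat) (A : 'M[R]_n) (Gm : 'M[R]_(p, n)).

Definition tmx : 'M[R]_n :=
  (1%:M - mpinv Gm *m Gm) *m mpinv A *m A + mpinv Gm *m Gm.

Hypothesis ker_sum : forall v : 'cV[R]_n,
  exists a b, [/\ A *m a = 0, Gm *m b = 0 & v = a + b].
Hypothesis ker_cap : forall a : 'cV[R]_n, A *m a = 0 -> Gm *m a = 0 -> a = 0.

(* With the orthogonal projectors PA := A^+ A and PG := Gm^+ Gm, T v = 0
   reads PG v = - (I - PG) PA v; the two sides are orthogonal, so both
   vanish.  Then u := PA v = PG u is orthogonal to ker A and to ker Gm,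
   which span R^n, so u = 0, and A v = Gm v = 0. *)
Lemma tmx_unit : tmx \in unitmx.
Proof.
apply: inj_col_unitmx => v Tv0.
have [idemPA symPA] := penrose_projector (mpinvP A).
have [idemPG symPG] := penrose_projector (mpinvP Gm).
have [AXA _ _ _] := mpinvP A; have [GXG _ _ _] := mpinvP Gm.
rewrite /tmx in Tv0.
set PG := mpinv Gm *m Gm in Tv0 idemPG symPG.
set PA := mpinv A *m A in idemPA symPA.
set a := PG *m v; set u := mpinv A *m A *m v.
have a_opp : a = - ((1%:M - PG) *m u).
  by apply/eqP; rewrite -addr_eq0 /a /u !mulmxA -mulmxDl addrC Tv0.
have PG_Q : PG *m (1%:M - PG) = 0 by rewrite mulmxBr mulmx1 idemPG subrr.
have a0 : a = 0.
  apply: trmx_mul_self_eq0; rewrite {2}a_opp mulmxN /a trmx_mul symPG !mulmxA.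
  by rewrite -(mulmxA v^T _ Gm) -/PG -(mulmxA v^T PG) PG_Q mulmx0 !mul0mx oppr0.
have Gv0 : Gm *m v = 0 by rewrite -GXG -!mulmxA (mulmxA _ Gm) -/PG -/a a0 mulmx0.
have PGu : PG *m u = u.
  apply/eqP; rewrite eq_sym -subr_eq0 -{1}[u]mul1mx -mulmxBl.
  by rewrite -oppr_eq0 -a_opp a0.
have PAu : PA *m u = u by rewrite /u -/PA mulmxA idemPA.
have u0 : u = 0.
  have [a' [b' [Aa' Gb' eu]]] := ker_sum u.
  apply: trmx_mul_self_eq0; rewrite {2}eu mulmxDr.
  have ua'0 : u^T *m a' = 0.
    by rewrite -PAu trmx_mul symPA /PA -!mulmxA Aa' !mulmx0.
  have ub'0 : u^T *m b' = 0.
    by rewrite -PGu trmx_mul symPG /PG -!mulmxA Gb' !mulmx0.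
  by rewrite ua'0 ub'0 addr0.
by apply: ker_cap Gv0; rewrite -AXA -!mulmxA (mulmxA _ A) -/u u0 mulmx0.
Qed.

Lemma tmx_intertwine : A *m A = A -> Gm *m A = 0 ->
  tmx *m A = (1%:M - mpinv Gm *m Gm) *m tmx.
Proof.
move=> AA GA.
have [idemPG _] := penrose_projector (mpinvP Gm).
have [QQ _] := penrose_coprojector (mpinvP Gm).
set PG := mpinv Gm *m Gm in idemPG QQ *.
have QPG : (1%:M - PG) *m PG = 0 by rewrite mulmxBl mul1mx idemPG subrr.
have PGA : PG *m A = 0 by rewrite /PG -mulmxA GA mulmx0.
rewrite /tmx -/PG [LHS]mulmxDl PGA addr0 -[LHS]mulmxA AA.
by rewrite [RHS]mulmxDr QPG addr0 !mulmxA QQ.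
Qed.

End Tmat.

End LinearAlgebra.

(** * Jacobian matrices *)

Section Jacobian.
Local Set Implicit Arguments.
Local Unset Strict Implicit.
Variable R : realType.

Lemma derive_comp (U V W : normedModType R) (f : U -> V)
    (h : V -> W) x v :
  differentiable f x -> differentiable h (f x) ->
  'D_v (h \o f) x = 'D_('D_v f x) h (f x).
Proof.
move=> df dh; rewrite deriveE; last exact: differentiable_comp.
by rewrite diff_comp // (deriveE _ df) (deriveE _ dh).
Qed.

Lemma deriveE_Dmx n m (f : 'cV[R]_n -> 'cV[R]_m) x v :
  differentiable f x -> 'D_v f x = Dmx f x *m v.
Proof.
move=> df; rewrite deriveE //.
have ev : v = \sum_j v j 0 *: basis_vec R j.
  apply/matrixP => i j; rewrite summxE (bigD1 i) //= big1 ?addr0.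
    by rewrite /basis_vec !mxE eqxx (ord1 j) /= mulr1.
  by move=> l /negbTE nl; rewrite /basis_vec !mxE eq_sym nl mulr0.
rewrite {1}ev linear_sum; apply/matrixP => i j.
rewrite summxE !mxE; apply: eq_bigr => l _.
by rewrite linearZ !mxE -deriveE // (ord1 j) mulrC.
Qed.

Lemma Dmx_comp n m l (f : 'cV[R]_n -> 'cV[R]_m)
    (h : 'cV[R]_m -> 'cV[R]_l) x :
  differentiable f x -> differentiable h (f x) ->
  Dmx (h \o f) x = Dmx h (f x) *m Dmx f x.
Proof.
move=> df dh; apply: mulmx_colI => v.
rewrite -mulmxA -(deriveE_Dmx v df) -(deriveE_Dmx _ dh) -derive_comp //.
by rewrite deriveE_Dmx //; exact: differentiable_comp.
Qed.

Lemma Dmx_near_eq n m (f h : 'cV[R]_n -> 'cV[R]_m) x :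
  (\forall y \near x, f y = h y) -> Dmx f x = Dmx h x.
Proof. by move=> fh; apply/matrixP => i j; rewrite !mxE (near_eq_derive _ fh). Qed.

Lemma Dmx_cst n m (c : 'cV[R]_m) (x : 'cV[R]_n) :
  Dmx (cst c) x = 0.
Proof. by apply/matrixP => i j; rewrite !mxE derive_cst mxE. Qed.

Lemma Dmx_tangent_eq0 n m (M : set 'cV[R]_n)
    (G : 'cV[R]_n -> 'cV[R]_m) y v :
  (forall z, M z -> G z = 0) -> differentiable G y ->
  tangent_space M y v -> Dmx G y *m v = 0.
Proof.
move=> GM0 dG [gam [gam0 Mgam /derivable1_diffP dgam <-]]; rewrite -gam0 in dG *.
rewrite -(deriveE_Dmx _ dG) -(derive_comp _ dgam) //.
have -> : G \o gam = cst 0 by apply/funext => t /=; exact: GM0.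
by rewrite derive_cst.
Qed.

End Jacobian.

(** * The lift f_h *)

Section Lift.
Local Set Implicit Arguments.
Local Unset Strict Implicit.
Variables (R : realType) (n k : nat) (B M : set 'cV[R]_n).
Variables (P : 'cV[R]_n -> 'cV[R]_n) (G : 'cV[R]_n -> 'cV[R]_(n - k)).
Variable g : 'cV[R]_n -> 'cV[R]_n.
Hypotheses (openB : open B) (MB : M `<=` B).
Hypothesis dP : forall x, B x -> differentiable P x.
Hypothesis dG : forall x, B x -> differentiable G x.
Hypothesis DG_surj : forall x, B x -> forall w, exists v : 'cV[R]_n, Dmx G x *m v = w.
Hypothesis G_eq0 : forall x, B x -> (G x = 0 <-> M x).
Hypothesis PM : forall x, B x -> M (P x).
Hypothesis P_id : forall y, M y -> P y = y.
Hypothesis ker_sum : forall x, B x -> forall v : 'cV[R]_n,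
  exists a b, [/\ Dmx P x *m a = 0, Dmx G x *m b = 0 & v = a + b].
Hypothesis ker_cap : forall x, B x -> forall a : 'cV[R]_n,
  Dmx P x *m a = 0 -> Dmx G x *m a = 0 -> a = 0.
Hypothesis g_tangent : forall y, M y -> tangent_space M y (g y).

Let BP x : B x -> B (P x). Proof. by move=> /PM /MB. Qed.

Lemma DG_DP_eq0 x : B x -> Dmx G (P x) *m Dmx P x = 0.
Proof.
move=> Bx; rewrite -Dmx_comp; [|exact: dP|exact/dG/BP].
rewrite -(Dmx_cst (0 : 'cV[R]_(n - k)) x).
apply: Dmx_near_eq; apply: filterS (openB Bx) => y By /=.
by apply/(G_eq0 (BP By)); exact: PM.
Qed.

Lemma DP_idem x : M x -> Dmx P x *m Dmx P x = Dmx P x.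
Proof.
move=> Mx; have Bx := MB Mx.
rewrite -{1}(P_id Mx) -Dmx_comp; [|exact: dP|by rewrite P_id //; exact: dP].
apply: Dmx_near_eq; apply: filterS (openB Bx) => y By /=.
exact/P_id/PM.
Qed.

Lemma DG_g_eq0 y : M y -> Dmx G y *m g y = 0.
Proof.
move=> My; apply: Dmx_tangent_eq0 (g_tangent My); last exact/dG/MB.
by move=> z Mz; apply/(G_eq0 (MB Mz)).
Qed.

Lemma g_P_range x : B x -> exists u, g (P x) = Dmx P x *m u.
Proof.
move=> Bx; have rowfree_DG y : B y -> row_free (Dmx G y).
  by move=> By; apply/surj_row_free/DG_surj.
apply: ker_sub_range (rowfree_DG _ (BP Bx)) _ (DG_DP_eq0 Bx) (DG_g_eq0 (PM Bx)).
exact: rank_ker_complement (rowfree_DG _ Bx) (ker_sum Bx) (ker_cap Bx).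
Qed.

Lemma Tmx_unit x : B x -> Tmx P G x \in unitmx.
Proof. by move=> Bx; exact: tmx_unit (ker_sum Bx) (ker_cap Bx). Qed.

Lemma f_h_lift x : B x -> Dmx P x *m f_h P G g x = g (P x).
Proof.
move=> Bx; have [u gPx] := g_P_range Bx; rewrite /f_h gPx.
exact: conj_penrose_lift (Tmx_unit Bx) (Tmx_unit (BP Bx)) (mpinvP _).
Qed.

Lemma f_h_on_M x : M x -> f_h P G g x = g x.
Proof.
move=> Mx; have Bx := MB Mx; have [u gPx] := g_P_range Bx.
have gx : g x = Dmx P x *m u by rewrite -{1}(P_id Mx).
have DGDP := DG_DP_eq0 Bx; rewrite P_id // in DGDP.
have [QQ symQ] := penrose_coprojector (mpinvP (Dmx G x)).
rewrite /f_h P_id // gx.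
exact: conj_penrose_fix (Tmx_unit Bx) (DP_idem Mx)
  (tmx_intertwine (DP_idem Mx) DGDP) symQ QQ (mpinvP _).
Qed.

End Lift.

Theorem proposition5 (R : realType) (n k r : nat)
  (B M : set 'cV[R]_n)
  (P : 'cV[R]_n -> 'cV[R]_n) (G : 'cV[R]_n -> 'cV[R]_(n - k))
  (g : 'cV[R]_n -> 'cV[R]_n) :
  (0 < k)%N -> (k < n)%N -> (1 <= r)%N ->
  open B -> connected B ->
  M `<=` B -> compact M -> connected M ->
  (exists gext : 'cV[R]_n -> 'cV[R]_n,
      Cr r B gext /\ forall y, M y -> gext y = g y) ->
  (forall y, M y -> tangent_space M y (g y)) ->
  Cr r B G ->
  (forall x, B x -> forall w : 'cV[R]_(n - k), exists v, Dmx G x *m v = w) ->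
  (forall x, B x -> (G x = 0 <-> M x)) ->
  Cr r B P ->
  (forall x, B x -> M (P x)) ->
  (forall y, M y -> P y = y) ->
  (forall x, B x ->
     (forall v : 'cV[R]_n, exists a b : 'cV[R]_n,
         [/\ Dmx P x *m a = 0, Dmx G x *m b = 0 & v = a + b]) /\
     (forall a : 'cV[R]_n, Dmx P x *m a = 0 -> Dmx G x *m a = 0 -> a = 0)) ->
  (forall x, B x -> Dmx P x *m f_h P G g x = g (P x)) /\
  (forall x, M x -> f_h P G g x = g x).
Proof.
move=> _ _ r_ge1 openB _ MB _ _ _ g_tangent Gr DG_surj G_eq0 Pr PM P_id A3.
case: r r_ge1 Gr Pr => [//|r] _ [dG _] [dP _].
have ker_sum x Bx := (A3 x Bx).1; have ker_cap x Bx := (A3 x Bx).2.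
split=> x.
- exact: f_h_lift openB MB dP dG DG_surj G_eq0 PM ker_sum ker_cap g_tangent x.
- exact: f_h_on_M openB MB dP dG DG_surj G_eq0 PM P_id ker_sum ker_cap g_tangent x.
Qed.
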